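(* Let $\lambda$ be a partition of $d$ with at most $n$ parts, padded with zeros to length $n$, and let $\nu$ be its reduction. Then $|N_\lambda|=|N_\nu|$. Moreover, $\mathcal{M}_{n,\lambda}=\mathcal{M}_{n,\nu}$ in $\mathbb{P}^{|N_\nu|-1}$, where the coordinates are identified by the bijection $N_\lambda\to N_\nu$ that replaces each entry of an index vector by the corresponding entry of $\nu$, as described below.
   Context: Work over $\mathbb{C}$. Reduction: pad $\lambda$ with zeros to length $n$. Let the distinct values occurring in the padded $\lambda$ (including $0$ if present) have multiplicities $k_0\ge k_1\ge\cdots\ge k_s$, and let $v_j$ denote the value with multiplicity $k_j$. The reduction of $\lambda$ is $$\nu=(\underbrace{s,\ldots,s}_{k_s},\underbrace{s-1,\ldots,s-1}_{k_{s-1}},\ldots,\underbrace{1,\ldots,1}_{k_1},\underbrace{0,\ldots,0}_{k_0}).$$ For example, both $(8,5,5,4)$ and $(7,7,3,0)$ (with $n=4$) have reduction $(2,1,0,0)$. The coordinate bijection replaces each entry $v_j$ of an index vector by $j$. For a vector $\kappa\in\mathbb{Z}_{\ge0}^n$ (such as the padded $\lambda$ or $\nu$), $N_\kappa$ is the set of all rearrangements $(i_1,\ldots,i_n)$ of $\kappa$; equivalently, the index vectors whose multiset of nonzero entries equals the nonzero parts of $\kappa$. The variety $\mathcal{M}_{n,\kappa}\subset\mathbb{P}^{|N_\kappa|-1}$, with coordinates $m_{i_1\cdots i_n}$ for $(i_1,\ldots,i_n)\in N_\kappa$, is the Zariski closure of the image of the monomial map $(\mu_{ki})\mapsto(\mu_{1i_1}\cdots\mu_{ni_n})_{(i_1,\ldots,i_n)\in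 N_\kappa}$, with the convention $\mu_{k0}=1$. *)

From HB Require Import structures.
From mathcomp Require Import all_boot all_order all_algebra.
From mathcomp Require Import reals.
From mathcomp Require Import complex.
From mathcomp Require Import mpoly.

Set Implicit Arguments.
Unset Strict Implicit.
Unset Printing Implicit Defensive.

Import Order.TTheory GRing.Theory Num.Theory.
Local Open Scope ring_scope.

Definition CC (R : realType) : numClosedFieldType := (R[i])%C.

Definition pad (n : nat) (lam : seq nat) : seq nat :=
  lam ++ nseq (n - size lam) 0%N.

Definition Nidx (kappa : seq nat) : seq (seq nat) := permutations kappa.

(* Given an enumeration vs = [:: v_0; ...; v_s] of the distinct values of
   the padded partition (ordered by nonincreasing multiplicity), the
   reduction nu = (s^{k_s}, ..., 1^{k_1}, 0^{k_0}). *)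
Definition reduction (lamp vs : seq nat) : seq nat :=
  flatten [seq nseq (count_mem (nth 0%N vs j) lamp) j
          | j <- rev (iota 0 (size vs))].

Definition code (vs : seq nat) (i : seq nat) : seq nat :=
  [seq index v vs | v <- i].


Definition monom (C : fieldType) (mu : nat -> nat -> C) (i : seq nat) : C :=
  \prod_(k < size i) (if nth 0%N i k == 0%N then 1 else mu k (nth 0%N i k)).

(* Point of P^{|N_kappa|-1} (affine representative) attached to a function
   x on index vectors, in the coordinates m_i, i in N_kappa. *)
Definition coords (C : fieldType) (kappa : seq nat) (x : seq nat -> C)
  : 'I_(size (Nidx kappa)) -> C :=
  fun j => x (nth [::] (Nidx kappa) j).
Arguments coords : clear implicits.

(* [x] lies in M_{n,kappa}: x is a nonzero vector and every homogeneous
   polynomial vanishing on the image of the monomial map vanishes at x,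
   i.e. [x] is in the Zariski closure of the image in P^{|N_kappa|-1}. *)
Definition inM (C : fieldType) (kappa : seq nat) (x : seq nat -> C) : Prop :=
  (exists j, coords C kappa x j != 0) /\
  forall (d : nat) (p : {mpoly C[size (Nidx kappa)]}),
    p \is d.-homog ->
    (forall mu : nat -> nat -> C, p.@[coords C kappa (monom (C:=C) mu)] = 0) ->
    p.@[coords C kappa x] = 0.

From HB Require Import structures.
From mathcomp Require Import all_boot all_order all_algebra.
From mathcomp Require Import reals complex mpoly.
From mathcomp Require Import fingroup perm.

(* Relabelling the entries by v_j |-> j maps the rearrangements of the padded
   partition bijectively onto those of its reduction.  Under this bijection
   the two monomial maps differ only in the value b whose variables are set
   to mu_{k b} = 1 (b = 0 for nu, b = index of 0 in vs for lambda).  Both are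
   specialisations of the monomial map in which every mu_{k v} is free, and a
   homogeneous polynomial vanishes on such a specialisation iff it vanishes
   on the free map: every coordinate contains exactly one factor mu_{k _} for
   each k, so dividing row k by mu_{k b} only rescales the point, and rows
   with mu_{k b} = 0 are limits of a one-parameter polynomial family. *)

Set Implicit Arguments.
Unset Strict Implicit.
Unset Printing Implicit Defensive.

Import Order.TTheory GRing.Theory Num.Theory.

Lemma count_flatten_nseq (T : eqType) (c : T -> nat) (r : seq T) (w : T) :
  uniq r ->
  count_mem w (flatten [seq nseq (c j) j | j <- r]) = if w \in r then c w else 0.
Proof.
elim: r => //= j r IHr /andP [j_r r_uniq].
rewrite count_cat count_nseq IHr // in_cons eq_sym /=.
by have [<- | _] := eqVneq j w; rewrite ?(negbTE j_r) ?mul1n ?addn0.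
Qed.

Lemma nth_code (vs i : seq nat) (k : nat) :
  k < size i -> nth 0 (code vs i) k = index (nth 0 i k) vs.
Proof. exact: nth_map. Qed.

Lemma perm_code_reduction (lamp vs : seq nat) :
  uniq vs -> {subset lamp <= vs} -> perm_eq (code vs lamp) (reduction lamp vs).
Proof.
move=> vs_uniq lam_vs; apply/allP => w _; apply/eqP.
rewrite count_flatten_nseq ?rev_uniq ?iota_uniq // mem_rev mem_iota add0n.
rewrite count_map; case: ltnP => [w_lt | w_ge].
- apply: eq_in_count => v /lam_vs v_vs /=.
  by apply/eqP/eqP => [<- | ->]; rewrite ?nth_index ?index_uniq.
- apply/eqP; rewrite eqn0Ngt -has_count; apply/hasPn => v /lam_vs v_vs /=.
  by rewrite neq_ltn (leq_trans _ w_ge) ?index_mem.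
Qed.

Lemma perm_map_permutations (T U : eqType) (f : T -> U) (g : U -> T) (s : seq T) :
  {in s, cancel f g} ->
  perm_eq (map (map f) (permutations s)) (permutations (map f s)).
Proof.
move=> fK.
have mapK u : perm_eq u s -> map g (map f u) = u.
  move=> us; rewrite -map_comp; apply: map_id_in => x xu.
  by apply: fK; rewrite -(perm_mem us).
apply: uniq_perm; rewrite ?permutations_uniq //.
  rewrite map_inj_in_uniq ?permutations_uniq // => u v.
  by rewrite !mem_permutations => u_s v_s fuv; rewrite -(mapK u) // fuv mapK.
move=> t; rewrite mem_permutations; apply/mapP/idP => [[u us ->] | ts].
  by apply: perm_map; rewrite -mem_permutations.
exists (map g t).
  by rewrite mem_permutations -(mapK s) ?perm_map.
rewrite -map_comp map_id_in // => y; rewrite (perm_mem ts) => /mapP [x xs ->] /=.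
by rewrite fK.
Qed.

Lemma perm_code_permutations (lamp vs : seq nat) :
  uniq vs -> {subset lamp <= vs} ->
  perm_eq [seq code vs i | i <- Nidx lamp] (Nidx (reduction lamp vs)).
Proof.
move=> vs_uniq lam_vs.
apply: perm_trans (perm_permutations (perm_code_reduction vs_uniq lam_vs)).
by apply: (@perm_map_permutations _ _ _ (nth 0 vs)) => v /lam_vs /nth_index.
Qed.

Lemma perm_map_reindex (T U : eqType) (x0 : T) (y0 : U) (f : T -> U)
    (s : seq T) (t : seq U) :
  uniq t -> perm_eq (map f s) t ->
  exists2 sig : 'I_(size s) -> 'I_(size t),
    injective sig & forall j, nth y0 t (sig j) = f (nth x0 s j).
Proof.
move=> t_uniq fst.
have fs_t (j : 'I_(size s)) : f (nth x0 s j) \in t.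
  by rewrite -(perm_mem fst) map_f ?mem_nth.
exists (fun j => Ordinal (etrans (index_mem _ _) (fs_t j)))
    => [j1 j2 /(congr1 val) /= e | j].
  have fs_uniq : uniq (map f s) by rewrite (perm_uniq fst).
  apply/ord_inj/eqP; rewrite -(nth_uniq y0 _ _ fs_uniq) ?size_map //.
  by rewrite !(nth_map x0) // -(nth_index y0 (fs_t j1)) e nth_index.
by rewrite /= nth_index.
Qed.

Local Open Scope ring_scope.

Section ProjectiveClosure.
Variables (C : comRingType) (N : nat).

Definition in_closure (P : Type) (phi : P -> 'I_N -> C) (y : 'I_N -> C) : Prop :=
  (exists j, y j != 0) /\
  forall d (p : {mpoly C[N]}), p \is d.-homog ->
    (forall t, p.@[phi t] = 0) -> p.@[y] = 0.

Lemma meval_dhomogZ (p : {mpoly C[N]}) d c (v : 'I_N -> C) :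
  p \is d.-homog -> p.@[fun j => c * v j] = c ^+ d * p.@[v].
Proof.
move=> /dhomogP p_homog; rewrite !mevalE big_distrr /=.
apply: eq_big_seq => m m_p; rewrite mulrCA; congr (_ * _).
rewrite -(p_homog m m_p) /= mdegE -prodrXr -big_split /=.
by apply: eq_bigr => i _; rewrite exprMn.
Qed.

Lemma meval_msym (p : {mpoly C[N]}) (s : 'S_N) (v : 'I_N -> C) :
  (msym s p).@[v] = p.@[fun i => v (s i)].
Proof.
rewrite {1}(mpolyE p) [msym s _]linear_sum /= rmorph_sum /= mevalE.
apply: eq_bigr => m _; rewrite msymZ mevalZ msymX mevalX; congr (_ * _).
rewrite (reindex s) /=; last by exists (s^-1)%g => i _; rewrite ?permK ?permKV.
by apply: eq_bigr => i _; rewrite mnmE permK.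
Qed.

Lemma msym_dhomog (p : {mpoly C[N]}) (s : 'S_N) d :
  p \is d.-homog -> msym s p \is d.-homog.
Proof. by rewrite !homog_piE -msym_pihomog => /eqP ->. Qed.

Lemma in_closure_perm (P Q : Type) (phi : P -> 'I_N -> C) (psi : Q -> 'I_N -> C)
    (s : 'S_N) (y z : 'I_N -> C) :
  (forall t, exists t', phi t =1 (fun i => psi t' (s i))) ->
  (forall t', exists t, (fun i => psi t' (s i)) =1 phi t) ->
  z =1 (fun i => y (s i)) ->
  in_closure psi y <-> in_closure phi z.
Proof.
move=> phi_psi psi_phi zE.
have vanish_msym p :
    (forall t, p.@[phi t] = 0) <-> (forall t', (msym s p).@[psi t'] = 0).
  split=> vanish t.
  - by have [t0 E] := psi_phi t; rewrite meval_msym (meval_eq _ E) vanish.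
  - by have [t' E] := phi_psi t; rewrite (meval_eq _ E) -meval_msym vanish.
have msymK q : msym s (msym (s^-1)%g q) = q by rewrite -msymMm mulVg msym1m.
have evalz p : p.@[z] = (msym s p).@[y] by rewrite meval_msym; apply: meval_eq.
split=> [[[j yj] y_closed] | [[j zj] z_closed]]; split.
- by exists ((s^-1)%g j); rewrite zE permKV.
- move=> d p p_homog /vanish_msym vanish; rewrite evalz.
  exact: y_closed (msym_dhomog s p_homog) vanish.
- by exists (s j); rewrite -zE.
- move=> d q q_homog vanish; rewrite -[q]msymK -evalz.
  by apply: z_closed (msym_dhomog _ q_homog) _; apply/vanish_msym; rewrite msymK.
Qed.

End ProjectiveClosure.

Lemma meval_horner_at0 (C : numDomainType) (N : nat) (p : {mpoly C[N]})
    (E : 'I_N -> {poly C}) :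
  (forall t, t != 0 -> p.@[fun j => (E j).[t]] = 0) ->
  p.@[fun j => (E j).[0]] = 0.
Proof.
move=> vanish.
pose P := \sum_(m <- msupp p) (p@_m)%:P * \prod_i E i ^+ m i.
have PE t : P.[t] = p.@[fun j => (E j).[t]].
  rewrite mevalE horner_sum; apply: eq_bigr => m _.
  rewrite hornerM hornerC horner_prod; congr (_ * _).
  by apply: eq_bigr => i _; rewrite horner_exp.
suff P0 : P = 0 by rewrite -PE P0 horner0.
apply: (@roots_geq_poly_eq0 _ _ (mkseq (fun i => i.+1%:R) (size P))).
- by apply/allP => _ /mapP [i _ ->]; rewrite /root PE vanish ?pnatr_eq0.
- by rewrite map_inj_uniq ?iota_uniq // => i j /eqP; rewrite eqr_nat => /eqP [].
- by rewrite size_mkseq.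
Qed.

Definition monomial_point (C : comRingType) (N m : nat) (L : 'I_N -> seq nat)
    (F : nat -> nat -> C) : 'I_N -> C :=
  fun j => \prod_(k < m) F k (nth 0%N (L j) k).

Lemma dhomog_vanish_normalized (C : numFieldType) (N m : nat) (L : 'I_N -> seq nat)
    (b : nat) (p : {mpoly C[N]}) (d : nat) :
  p \is d.-homog ->
  (forall F, (forall k, F k b = 1) -> p.@[monomial_point m L F] = 0) ->
  forall F, p.@[monomial_point m L F] = 0.
Proof.
move=> p_homog vanish_b.
have vanish_unit F : (forall k, F k b != 0) -> p.@[monomial_point m L F] = 0.
  move=> Fb_neq0; pose G k v := F k v / F k b.
  have -> : p.@[monomial_point m L F]
          = p.@[fun j => (\prod_(k < m) F k b) * monomial_point m L G j].
    apply: meval_eq => j; rewrite -big_split; apply: eq_bigr => k _ /=.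
    by rewrite mulrC divfK.
  by rewrite (meval_dhomogZ _ _ p_homog) vanish_b ?mulr0 // => k; rewrite /G divff.
move=> F; pose zero_at_b k v := (v == b) && (F k b == 0).
pose E j := \prod_(k < m)
  (if zero_at_b k (nth 0%N (L j) k) then 'X else (F k (nth 0%N (L j) k))%:P).
have EE t : (fun j => (E j).[t])
          =1 monomial_point m L (fun k v => if zero_at_b k v then t else F k v).
  move=> j; rewrite horner_prod; apply: eq_bigr => k _.
  by case: ifP; rewrite ?hornerX ?hornerC.
have -> : p.@[monomial_point m L F] = p.@[fun j => (E j).[0]].
  rewrite (meval_eq _ (EE 0)); apply: meval_eq => j; apply: eq_bigr => k _.
  by rewrite /zero_at_b; case: eqP => // -> /=; case: eqP.
apply: meval_horner_at0 => t t_neq0; rewrite (meval_eq _ (EE t)).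
by apply: vanish_unit => k; rewrite /zero_at_b eqxx /=; have [|] := eqVneq (F k b) 0.
Qed.

Lemma in_closure_code (C : comRingType) (vs : seq nat) (m NA NB : nat)
    (fA : 'I_NA -> seq nat) (fB : 'I_NB -> seq nat) (sig : 'I_NA -> 'I_NB)
    (y : 'I_NB -> C) (z : 'I_NA -> C) :
  NA = NB -> injective sig -> (forall j, fB (sig j) = code vs (fA j)) ->
  (forall j, size (fA j) = m) -> (forall j, all (mem vs) (fA j)) ->
  (forall j, z j = y (sig j)) ->
  in_closure (monomial_point m fB) y <-> in_closure (monomial_point m fA) z.
Proof.
move=> eN; subst NB => sig_inj fBE sizeA memA zE.
pose s := perm sig_inj; have sE j : s j = sig j by rewrite permE.
apply: (@in_closure_perm _ _ _ _ _ _ s) => [G | F | j]; last by rewrite zE sE.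
- exists (fun k w => G k (nth 0%N vs w)) => j.
  rewrite /monomial_point sE fBE; apply: eq_bigr => k _.
  rewrite nth_code ?sizeA // nth_index //.
  by apply: (allP (memA j)); rewrite mem_nth ?sizeA.
- exists (fun k v => F k (index v vs)) => j.
  by rewrite /monomial_point sE fBE; apply: eq_bigr => k _; rewrite nth_code ?sizeA.
Qed.

Lemma inM_closureE (C : numFieldType) (kappa : seq nat) (x : seq nat -> C) :
  inM kappa x <->
  in_closure (monomial_point (size kappa) (fun j => nth [::] (Nidx kappa) j))
             (coords C kappa x).
Proof.
pose normalize (mu : nat -> nat -> C) k v := if v == 0%N then 1 else mu k v.
have monomE mu : coords C kappa (monom mu)
    =1 monomial_point (size kappa) (fun j => nth [::] (Nidx kappa) j) (normalize mu).
  move=> j; have : nth [::] (Nidx kappa) j \in permutations kappa by rewrite mem_nth.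
  by rewrite mem_permutations => /perm_size; rewrite /coords /monom => ->.
split=> -[nz_x closed_x]; split=> // d p p_homog vanish; apply: (closed_x d p p_homog).
- by move=> mu; rewrite (meval_eq _ (monomE mu)).
- apply: (dhomog_vanish_normalized (b := 0%N) p_homog) => F F0.
  rewrite -(vanish F).
  apply: meval_eq => j; rewrite monomE; apply: eq_bigr => k _.
  by rewrite /normalize; case: eqP => // ->.
Qed.

Theorem lemma4p2 (R : realType) (n d : nat) (lam vs : seq nat) :
  (* lam is a partition of d with at most n parts *)
  sorted geq lam -> all (fun x => 0 < x)%N lam -> sumn lam = d ->
  (size lam <= n)%N ->
  (* vs enumerates the distinct values of the padded partition,
     by nonincreasing multiplicity *)
  uniq vs -> (forall v, (v \in pad n lam) = (v \in vs)) ->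
  sorted geq [seq count_mem v (pad n lam) | v <- vs] ->
  let nu := reduction (pad n lam) vs in
  size (Nidx (pad n lam)) = size (Nidx nu) /\
  perm_eq [seq code vs i | i <- Nidx (pad n lam)] (Nidx nu) /\
  (forall x : seq nat -> CC R,
     inM nu x <-> inM (pad n lam) (fun i => x (code vs i))).
Proof.
move=> _ _ _ _ vs_uniq mem_vs _ nu.
have lam_vs : {subset pad n lam <= vs} by move=> v; rewrite mem_vs.
have codeP := perm_code_permutations vs_uniq lam_vs.
have sizeN : size (Nidx (pad n lam)) = size (Nidx nu).
  by rewrite -(perm_size codeP) size_map.
split=> //; split=> // x.
have [sig sig_inj sigE] := perm_map_reindex [::] [::] (permutations_uniq nu) codeP.
have permA (j : 'I_(size (Nidx (pad n lam)))) :
    perm_eq (nth [::] (Nidx (pad n lam)) j) (pad n lam).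
  by rewrite -mem_permutations mem_nth.
have size_nu : size nu = size (pad n lam).
  by rewrite -(perm_size (perm_code_reduction vs_uniq lam_vs)) size_map.
rewrite !inM_closureE size_nu; apply: (in_closure_code sizeN sig_inj sigE) => j.
- exact: perm_size (permA j).
- by apply/allP => v; rewrite (perm_mem (permA j)); apply: lam_vs.
- by rewrite /coords sigE.
Qed.
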